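(* Let $M\ge1$, let $(\tau^\prime,R)$ be an $M$-layer medium, let $\mathsf{p}\in\mathsf{S}_M^\prime$ be a transmission scattering sequence, and set $(k,m)=(\kappa^\prime(\mathsf{p}),\beta^\prime(\mathsf{p}))$. Then \[ w(\mathsf{p})=(-R)^{\tilde{k}-m}R^{k-m}T^{2m+\mathbb{1}}. \]
   Context: Fix depths $z_{-1}<z_0<\cdots<z_M<z_{M+1}$ and reals $R=(R_0,\ldots,R_M)$ with $-1<R_n<1$ (the travel times $\tau^\prime$ play no role); $T_n=\sqrt{1-R_n^2}$, $T=(T_0,\ldots,T_M)$. A transmission scattering sequence is a finite sequence $\mathsf{p}=(\mathsf{p}_0,\ldots,\mathsf{p}_L)$ with $\mathsf{p}_0=z_{-1}$, $\mathsf{p}_L=z_{M+1}$, $\mathsf{p}_i\in\{z_0,\ldots,z_M\}$ for $1\le i\le L-1$, and for every $0\le i\le L-1$ there is $-1\le j\le M$ with $\{\mathsf{p}_i,\mathsf{p}_{i+1}\}=\{z_j,z_{j+1}\}$; $\mathsf{S}_M^\prime$ is the set of these. Its weight is $w(\mathsf{p})=\prod_{i=1}^{L-1}w_i$ where, if $\mathsf{p}_i=z_j$: $w_i=R_j$ if $\mathsf{p}_{i-1}=\mathsf{p}_{i+1}=z_{j-1}$; $w_i=-R_j$ if $\mathsf{p}_{i-1}=\mathsf{p}_{i+1}=z_{j+1}$; $w_i=T_j$ otherwise. For $0\le n\le M$, consider the maximal runs of consecutive indices $i$ with $\mathsf{p}_i\in\{z_n,\ldots,z_{M+1}\}$; the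 last one (containing index $L$) is the trunk run. $k_n$ is the number of non-trunk runs and $m_n$ the number of non-trunk runs of length at least 2; $\kappa^\prime(\mathsf{p})=(k_0,\ldots,k_M)$, $\beta^\prime(\mathsf{p})=(m_0,\ldots,m_M)$. Notation: $\tilde{k}=(k_1,\ldots,k_M,0)$; $\mathbb{1}=(1,\ldots,1)$; vector arithmetic entrywise; $s^d=\prod_{n=0}^M s_n^{d_n}$ with $0^0=1$. *)

From mathcomp Require Import all_boot all_order all_algebra.
Set Implicit Arguments. Unset Strict Implicit. Unset Printing Implicit Defensive.
Import Order.TTheory GRing.Theory Num.Theory.
Local Open Scope ring_scope.

(* Encoding: the depth z_j (-1 <= j <= M+1) is encoded by the natural number
   j+1 (so z_{-1} ~ 0, z_0 ~ 1, ..., z_M ~ M+1, z_{M+1} ~ M+2).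
   A scattering sequence p = (p_0,...,p_L) is a list of such codes. *)

Definition pos (p : seq nat) (i : nat) : nat := nth 0%N p i.

Definition lastidx (p : seq nat) : nat := (size p).-1.

Definition is_tss (M : nat) (p : seq nat) : bool :=
  [&& (2 <= size p)%N,
      pos p 0 == 0%N,
      pos p (lastidx p) == M.+2,
      all (fun i => (1 <= pos p i <= M.+1)%N)
          (iota 1 (lastidx p).-1)
    & all (fun i =>
             [exists j : 'I_M.+2,
                ((pos p i == j) && (pos p i.+1 == j.+1)) ||
                ((pos p i == j.+1) && (pos p i.+1 == j))])
          (iota 0 (lastidx p))].

Definition Tco (F : rcfType) (R : nat -> F) (n : nat) : F := Num.sqrt (1 - R n ^+ 2).

Definition wfac (F : rcfType) (R : nat -> F) (p : seq nat) (i : nat) : F :=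
  let a := pos p i.-1 in let b := pos p i.+1 in let c := pos p i in
  let j := c.-1 in
  if (a == b) && (a.+1 == c) then R j
  else if (a == b) && (a == c.+1) then - R j
  else Tco R j.

Definition weight (F : rcfType) (R : nat -> F) (p : seq nat) : F :=
  \prod_(1 <= i < lastidx p) wfac R p i.

Definition inlev (p : seq nat) (n i : nat) : bool := (n.+1 <= pos p i)%N.

Definition is_run (p : seq nat) (n a b : nat) : bool :=
  [&& (a <= b <= lastidx p)%N,
      all (inlev p n) (iota a (b - a).+1),
      (a == 0%N) || ~~ inlev p n a.-1
    & (b == lastidx p) || ~~ inlev p n b.+1].

(* k_n : number of non-trunk runs (the trunk run is the one containing L) *)
Definition kappa (p : seq nat) (n : nat) : nat :=
  #|[set ab : 'I_(lastidx p).+1 * 'I_(lastidx p).+1 |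
      is_run p n ab.1 ab.2 && (nat_of_ord ab.2 != lastidx p)]|.

Definition beta (p : seq nat) (n : nat) : nat :=
  #|[set ab : 'I_(lastidx p).+1 * 'I_(lastidx p).+1 |
      [&& is_run p n ab.1 ab.2, nat_of_ord ab.2 != lastidx p &
          (ab.1 < ab.2)%N]]|.

Definition ktilde (M : nat) (p : seq nat) (n : nat) : nat :=
  if (n < M)%N then kappa p n.+1 else 0%N.

From mathcomp Require Import all_boot all_order all_algebra zify.
Set Implicit Arguments. Unset Strict Implicit. Unset Printing Implicit Defensive.
Import GRing.Theory Num.Theory.

(* Classify each interior visit of p to a depth z_n by the shape of p around it: a peak
   (from z_{n-1} back to z_{n-1}) contributes R_n, a valley (from z_{n+1} back to z_{n+1})
   contributes -R_n, and an ascent or a descent contributes T_n.  The non-trunk runs above z_n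
   end exactly at the downward crossings z_n -> z_{n-1}, that is at peaks and descents, and
   such a run has length at least 2 iff it ends with a descent; so k_n = #peaks + #descents and
   m_n = #descents.  Shifting by one index, the downward crossings z_{n+1} -> z_n start the
   valleys and descents at z_n, whence k_{n+1} = #valleys + #descents, and the upward crossings
   z_{n-1} -> z_n start the ascents and peaks.  As p climbs from z_{-1} to z_{M+1}, it crosses
   every level once more upwards than downwards, so #ascents = #descents + 1. *)

Arguments pos : simpl never.

(* The level [n] is the depth z_n, whose code is [n.+1]. *)
Definition peak p n i : bool :=
  [&& pos p i.-1 == n, pos p i == n.+1 & pos p i.+1 == n].
Definition valley p n i : bool :=
  [&& pos p i.-1 == n.+2, pos p i == n.+1 & pos p i.+1 == n.+2].
Definition ascent p n i : bool :=
  [&& pos p i.-1 == n, pos p i == n.+1 & pos p i.+1 == n.+2].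
Definition descent p n i : bool :=
  [&& pos p i.-1 == n.+2, pos p i == n.+1 & pos p i.+1 == n].

Definition up_step p n j : bool := (pos p j == n) && (pos p j.+1 == n.+1).
Definition down_step p n j : bool := (pos p j == n.+1) && (pos p j.+1 == n).

Definition shape_factor (F : rcfType) (R : nat -> F) p n i : F :=
  ((- R n) ^+ valley p n i * R n ^+ peak p n i
   * Tco R n ^+ (ascent p n i + descent p n i))%R.

Lemma shape_factor_other (F : rcfType) (R : nat -> F) p n i :
  pos p i != n.+1 -> shape_factor R p n i = 1%R.
Proof.
by move/negbTE=> off; rewrite /shape_factor /valley /peak /ascent /descent off !andbF !mulr1.
Qed.

Lemma run_bounds p n a b : is_run p n a b -> (a <= b <= lastidx p)%N.
Proof. by case/and4P. Qed.

Lemma run_inlev p n a b i : is_run p n a b -> (a <= i <= b)%N -> inlev p n i.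
Proof.
by case/and4P=> /andP [ab _] /allP inrun _ _ Hi; apply: inrun; rewrite mem_iota; lia.
Qed.

Lemma run_left_uniq p n a a' b : is_run p n a b -> is_run p n a' b -> a = a'.
Proof.
wlog aa' : a a' / (a <= a')%N => [W r r'|].
  by case: (leqP a a') => [|/ltnW] h; [exact: W | symmetry; exact: W].
move=> r r'; apply/eqP; rewrite eqn_leq aa' leqNgt; apply/negP => lt.
have in_prev : inlev p n a'.-1 by apply: (run_inlev r); have := run_bounds r'; lia.
by case/and4P: r' => _ _ /orP [/eqP|]; [lia | rewrite in_prev].
Qed.

Lemma run_endP p n b : (b <= lastidx p)%N ->
  reflect (exists a, is_run p n a b)
          (inlev p n b && ((b == lastidx p) || ~~ inlev p n b.+1)).
Proof.
move=> bL; apply: (iffP idP) => [/andP [inb end_b] | [a r]]; last first.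
  have /andP [ab _] := run_bounds r.
  by rewrite (run_inlev r) ?ab //=; case/and4P: r => _ _ _.
pose P a := (a <= b)%N && all (inlev p n) (iota a (b - a).+1).
have exP : exists a, P a by exists b; rewrite /P leqnn subnn /= inb.
case: (ex_minnP exP) => a /andP [ab run_ab] a_min.
exists a; rewrite /is_run ab bL run_ab end_b andbT /=.
case: a ab run_ab a_min => [|a] //= ab run_ab a_min; rewrite andbT; apply/negP => ina.
have : P a.
  by rewrite /P (ltnW ab) (_ : (b - a).+1 = (b - a.+1).+2) /= ?ina //; lia.
by move/a_min; lia.
Qed.

Lemma run_long p n a b : is_run p n a b ->
  (a < b)%N = (0 < b)%N && inlev p n b.-1.
Proof.
move=> r; have /andP [ab _] := run_bounds r.
apply/idP/andP => [lt | [b_gt0 inb]].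
  by split; [lia | apply: (run_inlev r); lia].
rewrite ltn_neqAle ab andbT; apply: contraTneq inb => ab_eq.
by case/and4P: r => _ _ /orP [/eqP|]; [lia | rewrite ab_eq].
Qed.

Lemma card_runs_by_end p n (Y : nat -> bool) :
  #|[set ab : 'I_(lastidx p).+1 * 'I_(lastidx p).+1 |
      is_run p n ab.1 ab.2 && Y ab.2]|
  = \sum_(0 <= b < (lastidx p).+1)
      [&& inlev p n b, (b == lastidx p) || ~~ inlev p n b.+1 & Y b].
Proof.
rewrite -(card_in_imset (f := snd)); last first.
  move=> [a b] [a' b']; rewrite !inE /= => /andP [r _] /andP [r' _] E.
  by rewrite -{}E in r' *; congr pair; apply: val_inj; exact: run_left_uniq r r'.
rewrite -sum1_card big_mkcond /= big_mkord; apply: eq_bigr => b _.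
suff -> : (b \in [set x.2 | x in [set ab : 'I_(lastidx p).+1 * 'I_(lastidx p).+1 |
      is_run p n ab.1 ab.2 && Y ab.2]])
  = [&& inlev p n b, (b == lastidx p :> nat) || ~~ inlev p n b.+1 & Y b] by case: ifP.
have bL : (b <= lastidx p)%N by rewrite -ltnS.
rewrite andbA; apply/imsetP/andP => [[[a b'] + /= ->] | [/(run_endP n bL) [a r] Yb]].
  rewrite inE /= => /andP [r Yb]; split=> //.
  by have /andP [_ b'L] := run_bounds r; apply/(run_endP n b'L); exists a.
have al : (a < (lastidx p).+1)%N by have := run_bounds r; lia.
by exists (Ordinal al, b); rewrite // inE /= r.
Qed.

Lemma sum_nat_shift (f g : nat -> nat) m : (0 < m)%N -> f m.-1 = 0 ->
  (forall j, (j < m.-1)%N -> f j = g j.+1) ->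
  (\sum_(0 <= j < m) f j = \sum_(1 <= i < m) g i)%N.
Proof.
case: m => // m _ f_last fg.
by rewrite big_nat_recr //= f_last addn0 big_add1; apply: eq_big_nat.
Qed.

Section TransmissionSequence.

Variables (M : nat) (p : seq nat).
Hypothesis p_tss : is_tss M p.
Local Notation L := (lastidx p).

Lemma tss_lastidx_gt0 : (0 < L)%N.
Proof. by case/and5P: p_tss; rewrite /lastidx; case: (p) => [|? [|? ?]]. Qed.

Lemma tss_first : pos p 0 = 0.
Proof. by case/and5P: p_tss => _ /eqP. Qed.

Lemma tss_last : pos p L = M.+2.
Proof. by case/and5P: p_tss => _ _ /eqP. Qed.

Lemma tss_interior i : (0 < i < L)%N -> (0 < pos p i <= M.+1)%N.
Proof. by case/and5P: p_tss => _ _ _ /allP inner _ Hi; apply: inner; rewrite mem_iota; lia. Qed.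

Lemma tss_step i : (i < L)%N ->
  pos p i.+1 = (pos p i).+1 \/ pos p i = (pos p i.+1).+1.
Proof.
case/and5P: p_tss => _ _ _ _ /allP steps Hi.
have /steps/existsP [j /orP [] /andP [/eqP -> /eqP ->]] : i \in iota 0 L.
- by rewrite mem_iota.
- by left.
- by right.
Qed.

Lemma tss_step_pred i : (0 < i <= L)%N ->
  pos p i = (pos p i.-1).+1 \/ pos p i.-1 = (pos p i).+1.
Proof. by case/andP=> i_gt0 i_le; have := @tss_step i.-1; rewrite prednK //; apply; lia. Qed.

Lemma tss_before_last j : (j < L)%N -> (pos p j <= M.+1)%N.
Proof.
case: j => [|j] Hj; first by rewrite tss_first.
by have := @tss_interior j.+1; lia.
Qed.

Lemma wfac_shape (F : rcfType) (R : nat -> F) i : (0 < i < L)%N ->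
  wfac R p i = shape_factor R p (pos p i).-1 i.
Proof.
move=> Hi; have := tss_interior Hi; case E: (pos p i) => [|n] // n_le.
have prev : pos p i.-1 = n \/ pos p i.-1 = n.+2.
  by have := @tss_step_pred i; rewrite E; lia.
have next : pos p i.+1 = n \/ pos p i.+1 = n.+2.
  by have := @tss_step i; rewrite E; lia.
rewrite /wfac /shape_factor /peak /valley /ascent /descent E /=.
have n_neq : (n == n.+2) = false by lia.
by case: prev => ->; case: next => ->;
  rewrite !eqxx ?eqSS ?[n.+2 == n]eq_sym ?n_neq /= ?expr0 ?expr1 ?mulr1 ?mul1r.
Qed.

Lemma wfac_prod (F : rcfType) (R : nat -> F) i : (0 < i < L)%N ->
  wfac R p i = (\prod_(0 <= n < M.+1) shape_factor R p n i)%R.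
Proof.
move=> Hi; rewrite wfac_shape // big_mkord.
have n_lt : ((pos p i).-1 < M.+1)%N by have := tss_interior Hi; lia.
rewrite (bigD1 (Ordinal n_lt)) //= big1 ?mulr1 // => n n_neq.
apply: shape_factor_other; move: n_neq; apply: contra_neq => E.
by apply: val_inj; rewrite /= E.
Qed.

Lemma weight_shapes (F : rcfType) (R : nat -> F) :
  weight R p = (\prod_(0 <= n < M.+1)
    ((- R n) ^+ (\sum_(1 <= i < L) valley p n i)%N
     * R n ^+ (\sum_(1 <= i < L) peak p n i)%N
     * Tco R n ^+ (\sum_(1 <= i < L) ascent p n i + \sum_(1 <= i < L) descent p n i)%N))%R.
Proof.
rewrite /weight (eq_big_nat _ _ (fun i Hi => wfac_prod R Hi)) exchange_big_nat.
by apply: eq_bigr => n _; rewrite !big_split /= !prodrXr big_split.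
Qed.

Lemma down_step_split n :
  \sum_(0 <= j < L) down_step p n j = \sum_(1 <= i < L) (peak p n i + descent p n i).
Proof.
rewrite big_ltn ?tss_lastidx_gt0 // {1}/down_step tss_first add0n.
apply: eq_big_nat => i /andP [i_gt0 i_lt].
by have := @tss_step_pred i; rewrite /down_step /peak /descent; lia.
Qed.

Lemma down_step_shift n : (n <= M)%N ->
  \sum_(0 <= j < L) down_step p n.+1 j = \sum_(1 <= i < L) (valley p n i + descent p n i).
Proof.
move=> n_le; apply: sum_nat_shift tss_lastidx_gt0 _ _.
  by rewrite /down_step (prednK tss_lastidx_gt0) tss_last; lia.
by move=> j j_lt; have := @tss_step j.+1; rewrite /down_step /valley /descent /=; lia.
Qed.

Lemma up_step_shift n : (n <= M)%N ->
  \sum_(0 <= j < L) up_step p n j = \sum_(1 <= i < L) (ascent p n i + peak p n i).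
Proof.
move=> n_le; apply: sum_nat_shift tss_lastidx_gt0 _ _.
  by rewrite /up_step (prednK tss_lastidx_gt0) tss_last; lia.
by move=> j j_lt; have := @tss_step j.+1; rewrite /up_step /ascent /peak /=; lia.
Qed.

Lemma up_step_excess n : (n <= M)%N ->
  \sum_(0 <= j < L) up_step p n j = (\sum_(0 <= j < L) down_step p n j).+1.
Proof.
move=> n_le.
have balance : \sum_(0 <= j < L) ((pos p j <= n) + down_step p n j)
             = \sum_(0 <= j < L) ((pos p j.+1 <= n) + up_step p n j).
  by apply: eq_big_nat => j j_lt; have := @tss_step j; rewrite /down_step /up_step; lia.
move: balance tss_last; case: L tss_lastidx_gt0 => // m _.
rewrite !big_split /= big_nat_recl // [\sum_(0 <= i < m.+1) (pos p i.+1 <= n)]big_nat_recr //=.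
by rewrite tss_first => balance last_m; lia.
Qed.

Lemma ascent_descent n : (n <= M)%N ->
  \sum_(1 <= i < L) ascent p n i = (\sum_(1 <= i < L) descent p n i).+1.
Proof.
move=> n_le; have := up_step_excess n_le.
by rewrite up_step_shift // down_step_split !big_split /=; lia.
Qed.

Lemma kappa_down n : kappa p n = \sum_(0 <= j < L) down_step p n j.
Proof.
rewrite /kappa (card_runs_by_end _ _ (fun b => b != L)) big_nat_recr //= eqxx !andbF addn0.
by apply: eq_big_nat => j j_lt; have := @tss_step j; rewrite /inlev /down_step; lia.
Qed.

Lemma beta_descent n : beta p n = \sum_(1 <= i < L) descent p n i.
Proof.
pose Y b := [&& b != L, (0 < b)%N & inlev p n b.-1].
have -> : beta p n = #|[set ab : 'I_L.+1 * 'I_L.+1 | is_run p n ab.1 ab.2 && Y ab.2]|.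
  congr #|pred_of_set _|; apply/setP => ab; rewrite !inE /Y.
  by case r: is_run => //=; rewrite (run_long r).
rewrite card_runs_by_end big_nat_recr //= big_ltn ?ltnS ?tss_lastidx_gt0 //.
rewrite /Y eqxx !andbF /= addn0 add0n.
apply: eq_big_nat => i /andP [i_gt0 i_lt].
by have := @tss_step i; have := @tss_step_pred i; rewrite /inlev /descent; lia.
Qed.

Lemma ktilde_kappa n : (n <= M)%N -> ktilde M p n = kappa p n.+1.
Proof.
rewrite /ktilde leq_eqVlt => /orP [/eqP -> | ->] //.
rewrite ltnn kappa_down big1_seq // => j; rewrite mem_iota /down_step => /andP [_ j_lt].
by have := @tss_before_last j; lia.
Qed.

End TransmissionSequence.

Unset Implicit Arguments.
Local Open Scope ring_scope.

Theorem lemma3 (F : rcfType) (M : nat) (R : nat -> F) (p : seq nat) :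
  (1 <= M)%N ->
  (forall n : nat, (n <= M)%N -> -1 < R n < 1) ->
  is_tss M p ->
  weight R p =
  \prod_(0 <= n < M.+1)
     ((- R n) ^ ((ktilde M p n)%:Z - (beta p n)%:Z)
      * R n ^ ((kappa p n)%:Z - (beta p n)%:Z)
      * Tco R n ^ ((2 * beta p n).+1)%:Z).
Proof.
move=> _ _ p_tss; rewrite (weight_shapes p_tss R); apply: eq_big_nat => n.
rewrite ltnS => /andP [_ n_le].
rewrite (ktilde_kappa p_tss n_le) !(kappa_down p_tss) (down_step_shift p_tss n_le).
rewrite (down_step_split p_tss) (beta_descent p_tss) (ascent_descent p_tss n_le).
by rewrite !big_split /= !PoszD !addrK mul2n -addnn addSn.
Qed.
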